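(* Let $X_1,\dots,X_k$ be nonempty compact metric spaces. Every $(X_1,\dots,X_k)$-regular compact metric space $Y$ is also $(X_1\sqcup\dots\sqcup X_k)$-regular.
   Context: For nonempty compact metric spaces $Z_1,\dots,Z_m$, a compact metric space $Y$ is $(Z_1,\dots,Z_m)$-regular if it admits a countably infinite family $\mathcal Y=\mathcal Y_1\sqcup\dots\sqcup\mathcal Y_m$ of subsets such that: (a1) members of $\mathcal Y$ are pairwise disjoint and each member of $\mathcal Y_i$ is a subspace homeomorphic to $Z_i$; (a2) $\mathcal Y$ is null (for every $\varepsilon>0$ only finitely many members have diameter $\ge\varepsilon$, for a compatible metric); (a3) each member of $\mathcal Y$ has dense complement in $Y$; (a4) each $\bigcup\mathcal Y_i$ is dense in $Y$; (a5) any two points of $Y$ not in a common member of $\mathcal Y$ are separated by a subset of $Y$ that is open, closed and $\mathcal Y$-saturated (each member of $\mathcal Y$ is contained in it or disjoint from it). $X_1\sqcup\dots\sqcup X_k$ denotes the topological disjoint union (with $m=1$ in the definition). *)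

From HB Require Import structures.
From mathcomp Require Import all_boot all_order all_algebra.
From mathcomp Require Import all_classical all_reals.
From mathcomp Require Import topology metric_structure sigT_topology.
From mathcomp Require Import ereal.
Set Implicit Arguments.
Unset Strict Implicit.
Unset Printing Implicit Defensive.
Import Order.TTheory GRing.Theory Num.Theory.
Local Open Scope classical_set_scope.
Local Open Scope ring_scope.

Definition homeomorphic_subspace (Z Y : topologicalType) (A : set Y) : Prop :=
  exists (f : Z -> Y) (g : Y -> Z),
    continuous f /\ f @` setT = A /\ (forall z, g (f z) = z) /\
    {within A, continuous g}.

(* diameter of a subset of a metric space (extended real, -oo for the empty set) *)
Definition diam {R : realType} {Y : metricType R} (A : set Y) : \bar R :=
  ereal_sup [set (mdist x y)%:E | x in A & y in A].

(* Y is (Z_1, ..., Z_m)-regular.  The countably infinite family is enumerated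
   injectively by F : nat -> set Y, and lab n says which subfamily Y_i
   the member F n belongs to. *)
Definition regular {R : realType} (m : nat) (Z : 'I_m -> topologicalType)
    (Y : metricType R) : Prop :=
  exists (F : nat -> set Y) (lab : nat -> 'I_m),
    injective F /\
    (forall n n', n <> n' -> F n `&` F n' = set0) /\
    (forall n, homeomorphic_subspace (Z (lab n)) (F n)) /\
    (forall eps : R, 0 < eps -> finite_set [set n | (eps%:E <= diam (F n))%E]) /\
    (forall n, dense (~` F n)) /\
    (forall i, dense (\bigcup_(n in [set n | lab n = i]) F n)) /\
    (forall x y : Y, x <> y -> ~ (exists n, F n x /\ F n y) ->
       exists U : set Y, open U /\ closed U /\
         (forall n, F n `<=` U \/ F n `&` U = set0) /\ U x /\ ~ U y).

From HB Require Import structures.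
From mathcomp Require Import all_boot all_order all_algebra finmap.
From mathcomp Require Import all_classical all_reals.
From mathcomp Require Import topology metric_structure sigT_topology.
From mathcomp Require Import ereal lra.
Set Implicit Arguments.
Unset Strict Implicit.
Unset Printing Implicit Defensive.
Import Order.TTheory GRing.Theory Num.Theory.
Local Open Scope classical_set_scope.
Local Open Scope ring_scope.

(* Group the members of the family into k-tuples, one member of each label, so
   that every member lies in exactly one group.  Each group is then a copy of
   X_1 + ... + X_k, and density and nowhere density pass from members to groups.
   Group n is the first unused member together with members of the other labels
   meeting a small ball around one of its points c: they exist, avoiding the
   members used so far, since every label is dense and finitely many members
   form a closed nowhere dense set.  As late members are small, group n lies
   within 1/(n+1) of its first member, so the groups form a null family.
   For (a5), after group n we also choose a finite cover of Y by clopen sets that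
   are saturated for the members and for the groups so far, each within 1/(n+1)
   of a point, a member or a group; the next group is taken near c inside the
   cells containing c, so the cells stay saturated.  Two points in no common
   group are never both close to one point, member or group, hence some cell of
   a late cover contains one of them but not the other. *)

(* [compact_cover] is only stated for pointed spaces. *)
Section PointedCover.
Variables (T : topologicalType) (t0 : T).

Local Definition pointed_at : Type := T.
HB.instance Definition _ := Topological.on pointed_at.
HB.instance Definition _ := isPointed.Build pointed_at t0.

Lemma compact_cover_at (A : set T) : compact A -> cover_compact A.
Proof. by move=> cA; have : @compact pointed_at A by []; rewrite compact_cover. Qed.

End PointedCover.

Lemma compact_finite_subcover (T : topologicalType) (A : set T) :
  compact A -> cover_compact A.
Proof.
move=> cA; have [[a _]|A0] := pselect (A !=set0); first exact: compact_cover_at.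
by move=> I D f _ _; exists fset0 => // x Ax; exfalso; apply: A0; exists x.
Qed.

Lemma choice_on (T U : Type) (A : set T) (P : T -> U -> Prop) :
  (forall x, A x -> exists u, P x u) -> inhabited U ->
  exists f : T -> U, forall x, A x -> P x (f x).
Proof.
move=> h [u0]; suff /choice [f Pf] : forall x, exists u, A x -> P x u.
  by exists f.
move=> x; have [/h [u Pu]|nAx] := pselect (A x); first by exists u.
by exists u0 => /nAx.
Qed.

Section ClopenAlgebraSeparation.
Variables (T : topologicalType) (B : set (set T)).
Hypothesis B_open : forall U, B U -> open U.
Hypothesis BT : B setT.
Hypothesis BC : forall U, B U -> B (~` U).
Hypothesis BI : forall U V, B U -> B V -> B (U `&` V).

Lemma B_bigcap (I : choiceType) (D : {fset I}) (f : I -> set T) :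
  (forall i, i \in D -> B (f i)) -> B (\bigcap_(i in [set` D]) f i).
Proof. by move=> Bf; rewrite bigcap_fset big_seq; apply: big_ind. Qed.

Lemma B_bigcup (I : choiceType) (D : {fset I}) (f : I -> set T) :
  (forall i, i \in D -> B (f i)) -> B (\bigcup_(i in [set` D]) f i).
Proof.
move=> Bf; rewrite -[X in B X]setCK setC_bigcup.
by apply/BC/B_bigcap => i iD; exact/BC/Bf.
Qed.

Lemma B_separate_compact_point (p : T) (C : set T) : compact C ->
  (forall q, C q -> exists U, [/\ B U, U p & ~ U q]) ->
  exists V, [/\ B V, V p & V `&` C = set0].
Proof.
move=> cC sep; have [U HU] := choice_on sep (inhabits setT).
have [||D DC CD] := compact_finite_subcover cC (D := C) (f := fun q => ~` U q).
- by move=> q /HU [/BC /B_open].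
- by move=> q Cq; exists q => //; case: (HU q Cq).
exists (\bigcap_(q in [set` D]) U q); split.
- by apply: B_bigcap => q /DC/set_mem/HU [].
- by move=> q /DC/set_mem/HU [].
- by apply/seteqP; split => // y [Uy /CD [q /= Dq]]; apply; apply: Uy.
Qed.

Lemma B_separate_compact (K C : set T) : compact K -> compact C ->
  (forall p q, K p -> C q -> exists U, [/\ B U, U p & ~ U q]) ->
  exists V, [/\ B V, K `<=` V & V `&` C = set0].
Proof.
move=> cK cC sep.
have [V HV] := choice_on (fun p Kp => B_separate_compact_point cC (sep p ^~ Kp))
  (inhabits setT).
have [||D DK KD] := compact_finite_subcover cK (D := K) (f := V).
- by move=> p /HV [/B_open].
- by move=> p Kp; exists p => //; case: (HV p Kp).
exists (\bigcup_(p in [set` D]) V p); split.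
- by apply: B_bigcup => p /DK/set_mem/HV [].
- exact: KD.
- apply/seteqP; split => // y [[p /= /DK/set_mem Kp Vy] Cy].
  by case: (HV p Kp) => _ _ VC; have : (V p `&` C) y by []; rewrite VC.
Qed.

End ClopenAlgebraSeparation.

Lemma finite_nat_bounded (A : set nat) :
  finite_set A -> exists N, forall n, A n -> (n < N)%N.
Proof.
move=> /finite_fsetP [D ->]; exists (\max_(n <- D) n.+1) => n Dn.
exact: (leq_bigmax_seq (F := succn)).
Qed.

Lemma inv_succn_lt (R : realType) (e : R) :
  0 < e -> exists N, forall j, (N <= j)%N -> j.+1%:R^-1 < e.
Proof.
move=> e0; exists (Num.Def.archi_bound e^-1) => j Nj.
have ie : e^-1 < j.+1%:R.
  apply: (lt_le_trans (archi_boundP _)); first by rewrite invr_ge0 ltW.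
  by rewrite ler_nat (leq_trans Nj).
by rewrite -[e]invrK ltf_pV2 ?posrE ?invr_gt0 ?ltr0n.
Qed.

Section Thickening.
Variables (R : realType) (Y : metricType R).

Definition thicken (r : R) (K : set Y) := [set y | exists2 a, K a & mdist a y < r].

Lemma open_thicken r K : open (thicken r K).
Proof.
rewrite openE => y [a Ka day]; apply/nbhs_ballP.
exists (r - mdist a y) => [|z]; first by rewrite /= subr_gt0.
rewrite ballEmdist /= ltrBrDl => dyz; exists a => //.
exact: le_lt_trans (metric_triangle a y z) dyz.
Qed.

Lemma sub_thicken r K : 0 < r -> K `<=` thicken r K.
Proof. by move=> r0 x Kx; exists x; rewrite ?mdistxx. Qed.

Lemma thickenS r s K L : r <= s -> K `<=` L -> thicken r K `<=` thicken s L.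
Proof. by move=> rs KL y [a /KL La ay]; exists a => //; exact: lt_le_trans rs. Qed.

Lemma closed_not_thicken (A : set Y) x : closed A -> ~ A x ->
  exists2 r, 0 < r & ~ thicken r A x.
Proof.
rewrite -openC openE => /[apply] /nbhs_ballP [r r0 rA].
by exists r => // -[a Aa ax]; apply: (rA a) Aa; rewrite ballEmdist /= metric_sym.
Qed.

Lemma le_diam (A : set Y) a b : A a -> A b -> ((mdist a b)%:E <= diam A)%E.
Proof. by move=> Aa Ab; apply: ereal_sup_ubound; exists a => //; exists b. Qed.

Lemma diam_le (A : set Y) e :
  (forall a b, A a -> A b -> mdist a b <= e) -> (diam A <= e%:E)%E.
Proof.
by move=> Ae; apply: ge_ereal_sup => _ [a Aa [b Ab <-]]; rewrite lee_fin Ae.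
Qed.

Definition null_family (G : nat -> set Y) := forall eps, 0 < eps ->
  exists N, forall n a b, (N <= n)%N -> G n a -> G n b -> mdist a b < eps.

Lemma null_familyP (G : nat -> set Y) :
  (forall eps : R, 0 < eps -> finite_set [set n | (eps%:E <= diam (G n))%E])
  <-> null_family G.
Proof.
split=> [fin eps e0|null eps e0].
  have [N HN] := finite_nat_bounded (fin eps e0).
  exists N => n a b Nn Ga Gb; rewrite ltNge; apply/negP => le.
  have : (eps%:E <= diam (G n))%E by apply: le_trans (le_diam Ga Gb); rewrite lee_fin.
  by move/HN; rewrite ltnNge Nn.
have [N HN] := null (eps / 2) (divr_gt0 e0 (ltr0Sn _ 1)).
apply: (sub_finite_set _ (finite_II N)) => n /= le; rewrite ltnNge; apply/negP => Nn.
have : (diam (G n) <= (eps / 2)%:E)%E.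
  by apply: diam_le => a b Ga Gb; exact/ltW/(HN n a b Nn Ga Gb).
by move=> /(le_trans le); rewrite lee_fin; lra.
Qed.

End Thickening.

Lemma ltnS_split j n : (j < n.+1)%N -> j = n \/ (j < n)%N.
Proof. by rewrite ltnS leq_eqVlt => /orP [/eqP|]; [left|right]. Qed.

Lemma uniform_radius (R : realType) (N : nat) (Q : nat -> R -> Prop) :
  (forall j r s, 0 < s -> s <= r -> Q j r -> Q j s) ->
  (forall j, (j < N)%N -> exists2 r, 0 < r & Q j r) ->
  exists2 r, 0 < r & forall j, (j < N)%N -> Q j r.
Proof.
move=> mono; elim: N => [_|N IH QN]; first by exists 1.
have [r1 r1_gt0 Q1] := IH (fun j jN => QN j (ltnW jN)).
have [r2 r2_gt0 Q2] := QN N (ltnSn N).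
have r_gt0 : 0 < Num.min r1 r2 by rewrite lt_min r1_gt0.
exists (Num.min r1 r2) => // j /ltnS_split [->|jN].
  by apply: mono Q2; rewrite // ge_min lexx orbT.
by apply: mono (Q1 j jN); rewrite // ge_min lexx.
Qed.

Lemma within_bigcup_continuous (T U : topologicalType) (I : finType)
    (S : I -> set T) (f : T -> U) :
  (forall i, closed (S i)) -> (forall i, {within S i, continuous f}) ->
  {within \bigcup_i S i, continuous f}.
Proof.
move=> Scl Sf; have -> : \bigcup_i S i = \big[setU/set0]_(i <- enum I) S i.
  by rewrite -bigcup_seq; apply: eq_bigcupl; split => i // _; rewrite /= mem_enum.
suff [] : closed (\big[setU/set0]_(i <- enum I) S i) /\
  {within \big[setU/set0]_(i <- enum I) S i, continuous f} by [].
apply: (big_ind (fun A => closed A /\ {within A, continuous f})) => [||i _] //.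
- by split; [exact: closed0 | exact: continuous_subspace0].
- by move=> A B [cA fA] [cB fB]; split; [exact: closedU | exact: withinU_continuous].
Qed.

Section SigmaSubspace.
Variables (k : nat) (X : 'I_k -> topologicalType) (Y : topologicalType).
Variable (S : 'I_k -> set Y).
Hypothesis S_closed : forall i, closed (S i).
Hypothesis S_disj : forall i j, i <> j -> S i `&` S j = set0.
Hypothesis S_hom : forall i, homeomorphic_subspace (X i) (S i).
Local Unset Implicit Arguments.

Let f i : X i -> Y := proj1_sig (cid (S_hom i)).
Let g i : Y -> X i := proj1_sig (cid (proj2_sig (cid (S_hom i)))).
Let fg i : [/\ continuous (f i), f i @` setT = S i, (forall z, g i (f i z) = z)
  & {within S i, continuous (g i)}].
Proof. by have [? [? [? ?]]] := proj2_sig (cid (proj2_sig (cid (S_hom i)))). Qed.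

Variable s0 : {i & X i}.

Let g_sigT (y : Y) : {i & X i} :=
  if pselect (exists i, S i y) is left h
  then existT (fun i => X i) _ (g (proj1_sig (cid h)) y)
  else s0.

Let g_sigTE i y : S i y -> g_sigT y = existT (fun i => X i) i (g i y).
Proof.
rewrite /g_sigT => Siy; case: pselect => [h|]; last by case; exists i.
case: (cid h) => j Sjy /=; have -> // : j = i.
by apply: contrapT => /S_disj ji; have : (S j `&` S i) y by []; rewrite ji.
Qed.

Lemma homeomorphic_subspace_sigT : homeomorphic_subspace {i & X i} (\bigcup_i S i).
Proof.
exists (unstable.sigT_fun f), g_sigT; split; last split; last split.
- by apply: sigT_continuous => i; case: (fg i).
- apply/seteqP; split => [_ [[i x] _ <-]|y [i _]].
    by exists i => //; case: (fg i) => _ <- _ _; exists x.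
  by case: (fg i) => _ <- _ _ [x _ <-]; exists (existT _ i x).
- move=> [i x] /=; case: (fg i) => _ fS gf _.
  by rewrite (g_sigTE i) ?gf // -fS; exists x.
apply: within_bigcup_continuous => // i.
apply: (@subspace_eq_continuous _ _ _ (existT _ i \o g i)).
  by move=> y /set_mem Siy; rewrite /from_subspace /= (g_sigTE _ _ Siy).
move=> y; apply: (@continuous_comp (subspace (S i)) (X i) _ (g i) (existT _ i)).
  by case: (fg i) => _ _ _; apply.
exact: existT_continuous.
Qed.

End SigmaSubspace.

Lemma dependent_choice_seq (T : Type) (P : seq T -> Prop) :
  P [::] -> (forall s, P s -> exists x, P (rcons s x)) ->
  exists f : nat -> T, forall n, P (mkseq f n).
Proof.
move=> P0 ext; have [x0 _] := ext _ P0.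
have [g Pg] := choice_on ext (inhabits x0).
pose h n := iter n (fun s => rcons s (g s)) [::].
exists (fun n => g (h n)) => n.
suff -> : mkseq (fun n => g (h n)) n = h n by elim: n => //= n; exact: Pg.
by elim: n => // n IH; rewrite mkseqS IH.
Qed.

Definition all_or_none (T : Type) (S U : set T) := S `<=` U \/ S `&` U = set0.

Lemma all_or_noneC (T : Type) (S U : set T) :
  all_or_none S U -> all_or_none S (~` U).
Proof.
case=> [SU|SU]; [right|left]; first by apply/disjoints_subset; rewrite setCK.
by apply/disjoints_subset.
Qed.

Lemma all_or_noneI (T : Type) (S U V : set T) :
  all_or_none S U -> all_or_none S V -> all_or_none S (U `&` V).
Proof.
case=> [SU|SU]; last by right; rewrite setIA SU set0I.
case=> [SV|SV]; first by left=> x Sx; split; [exact: SU | exact: SV].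
by right; rewrite setICA SV setI0.
Qed.

Lemma index_bound (I : finType) (M : nat -> I -> nat) n :
  exists B, forall j i, (j < n)%N -> (M j i < B)%N.
Proof.
exists (\max_(j < n) \max_i (M j i).+1) => j i jn.
apply: leq_trans (leq_bigmax (F := fun j : 'I_n => \max_i (M j i).+1) (Ordinal jn)).
exact: (leq_bigmax (F := fun i => (M j i).+1)).
Qed.

(* Taking [n] itself whenever it is still unused puts every index in a group. *)
Lemma fresh_index (I : finType) (M : nat -> I -> nat) n B :
  (forall j i, (j < n)%N -> (M j i < B)%N) ->
  exists m0, [/\ forall j i, (j < n)%N -> M j i <> m0, (n <= m0)%N
    & m0 = n \/ exists j i, (j < n)%N /\ M j i = n].
Proof.
move=> MB; have [[j [i [jn Mn]]]|unused] := pselect (exists j i, (j < n)%N /\ M j i = n).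
  exists B; split; last by right; exists j, i.
    by move=> j' i' j'n eB; have := MB j' i' j'n; rewrite eB ltnn.
  by rewrite -Mn ltnW // MB.
by exists n; split => //; [move=> j i jn Mn; apply: unused; exists j, i | left].
Qed.

Lemma nbhs_same_clopens (T : topologicalType) (Q : {fset set T}) (c : T) :
  (forall U, U \in Q -> clopen U) ->
  nbhs c [set y | forall U, U \in Q -> (U y <-> U c)].
Proof.
move=> cQ; pose side U := if asbool (U c) then U else ~` U.
apply: (filterS _ (@filter_bigI _ _ Q side _ _ _)).
  move=> y Qy U QU; have := Qy U QU; rewrite /side.
  by case: ifPn => /asboolP Uc //= nUy; split => // /nUy.
move=> U /cQ [oU clU]; apply: open_nbhs_nbhs; rewrite /side.
by case: ifPn => /asboolP Uc; split => //; rewrite openC.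
Qed.

Section Grouping.
Variables (R : realType) (Y : metricType R) (k : nat).
Variables (F : nat -> set Y) (lab : nat -> 'I_k).
Hypothesis Y_compact : compact [set: Y].
Hypothesis F_compact : forall n, compact (F n).
Hypothesis F_neq0 : forall n, F n !=set0.
Hypothesis F_disj : forall n n', n <> n' -> F n `&` F n' = set0.
Hypothesis F_null : null_family F.
Hypothesis F_dense_compl : forall n, dense (~` F n).
Hypothesis F_lab_dense : forall i, dense (\bigcup_(n in [set n | lab n = i]) F n).
Hypothesis F_sep : forall x y : Y, x <> y -> ~ (exists n, F n x /\ F n y) ->
  exists U : set Y, open U /\ closed U /\
    (forall n, F n `<=` U \/ F n `&` U = set0) /\ U x /\ ~ U y.

Lemma F_closed n : closed (F n).
Proof. by apply: compact_closed; [exact: metric_hausdorff | exact: F_compact]. Qed.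

Lemma F_eq n n' y : F n y -> F n' y -> n = n'.
Proof.
move=> Fy F'y; apply: contrapT => /F_disj nn'.
by have : (F n `&` F n') y by []; rewrite nn'.
Qed.

Definition saturated (K : set Y) := forall n, F n `&` K !=set0 -> F n `<=` K.

Definition saturated_clopen (U : set Y) := clopen U /\ forall n, all_or_none (F n) U.

Lemma saturated_clopen_separate (K C : set Y) : compact K -> closed C ->
  saturated K -> K `&` C = set0 ->
  exists V, [/\ saturated_clopen V, K `<=` V & V `&` C = set0].
Proof.
move=> cK cC satK KC; apply: (B_separate_compact (B := saturated_clopen)) => //.
- by move=> U [[]].
- by split=> [|n]; [exact: clopenT | left].
- by move=> U [cU aU]; split=> [|n]; [exact: clopenC | exact: all_or_noneC].
- move=> U V [cU aU] [cV aV]; split=> [|n]; [exact: clopenI | exact: all_or_noneI].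
- exact: subclosed_compact cC Y_compact _.
move=> p q Kp Cq; have pq : p <> q.
  by move=> epq; rewrite -epq in Cq; have : (K `&` C) p by []; rewrite KC.
have [|U [oU [clU [aU [Up nUq]]]]] := F_sep pq.
  move=> [n [Fp Fq]]; have /(_ q Fq) Kq := satK n (ex_intro _ p (conj Fp Kp)).
  by have : (K `&` C) q by []; rewrite KC.
by exists U; split.
Qed.

Lemma saturated_clopen_around (K : set Y) (r : R) (G : nat -> set Y) (N : nat) :
  0 < r -> compact K -> saturated K -> (forall j, closed (G j)) ->
  (forall j, (j < N)%N -> G j `&` K !=set0 -> G j `<=` K) ->
  exists V, [/\ saturated_clopen V, K `<=` V, V `<=` thicken r K
    & forall j, (j < N)%N -> all_or_none (G j) V].
Proof.
move=> r0 cK satK clG GK.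
pose far := \bigcup_(j in [set j | (j < N)%N /\ G j `&` K = set0]) G j.
pose C := ~` thicken r K `|` far.
have clC : closed C.
  apply: closedU; first by rewrite closedC; exact: open_thicken.
  apply: closed_bigcup => [|j _]; last exact: clG.
  by apply: sub_finite_set (finite_II N) => j [].
have KC : K `&` C = set0.
  apply/seteqP; split => // y [Ky [nty|[j [_ GK0] Gy]]].
    by apply: nty; exact: sub_thicken.
  by have : (G j `&` K) y by []; rewrite GK0.
have [V [sV KV VC]] := saturated_clopen_separate cK clC satK KC.
exists V; split => // [y Vy|j jN].
  apply: contrapT => ny; have : (V `&` C) y by split => //; left.
  by rewrite VC.
have [/(GK j jN) GjK|GK0] := pselect (G j `&` K !=set0); first by left => y /GjK /KV.
have {}GK0 : G j `&` K = set0 by apply/seteqP; split => // z GKz; apply: GK0; exists z.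
right; apply/seteqP; split => // y [Gy Vy].
have : (V `&` C) y by split => //; right; exists j.
by rewrite VC.
Qed.

Definition group (M : 'I_k -> nat) := \bigcup_i F (M i).

Lemma closed_group M : closed (group M).
Proof. by apply: closed_bigcup => [|i _]; [exact: finite_finset | exact: F_closed]. Qed.

Lemma compact_group M : compact (group M).
Proof. by apply: (@subclosed_compact _ _ setT) => //; exact: closed_group. Qed.

Lemma saturated_group M : saturated (group M).
Proof.
move=> n [y [Fy [i _ Fiy]]] z Fz; exists i => //.
by rewrite -(F_eq Fy Fiy).
Qed.

Definition index_disjoint (M : nat -> 'I_k -> nat) n :=
  forall j j' i i', (j < n)%N -> (j' < n)%N -> M j i = M j' i' -> j = j'.

Lemma group_meet_eq M n j j' : index_disjoint M n -> (j < n)%N -> (j' < n)%N ->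
  group (M j) `&` group (M j') !=set0 -> j = j'.
Proof.
move=> Mdisj jn j'n [y [[i _ Fy] [i' _ F'y]]].
by apply: (Mdisj j j' i i') => //; exact: F_eq Fy F'y.
Qed.

Definition small (M : nat -> 'I_k -> nat) n (K : set Y) :=
  [\/ exists p, K = [set p], exists m, K = F m | exists2 j, (j < n)%N & K = group (M j)].

Lemma small_cell M n r p : 0 < r -> index_disjoint M n ->
  exists V, [/\ saturated_clopen V, V p,
    forall j, (j < n)%N -> all_or_none (group (M j)) V
    & exists2 K, small M n K & V `<=` thicken r K].
Proof.
move=> r0 Mdisj.
suff [K [Kp cK sK smK GK]] : exists K, [/\ K p, compact K, saturated K, small M n K
    & forall j, (j < n)%N -> group (M j) `&` K !=set0 -> group (M j) `<=` K].
  have [V [sV KV VK aV]] := saturated_clopen_around (G := fun j => group (M j))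
    r0 cK sK (fun j => @closed_group (M j)) GK.
  by exists V; split => //; [exact: KV | exists K].
have [[j0 j0n Gp]|nG] := pselect (exists2 j, (j < n)%N & group (M j) p).
  exists (group (M j0)); split => //.
  - by apply: compact_group.
  - exact: saturated_group.
  - by apply: Or33; exists j0.
  - by move=> j jn /(group_meet_eq Mdisj jn j0n) ->.
have [[m Fp]|nF] := pselect (exists m, F m p).
  exists (F m); split => //.
  - by move=> m' [y [F'y Fy]]; rewrite (F_eq F'y Fy).
  - by apply: Or32; exists m.
  - move=> j jn; rewrite setIC => /(@saturated_group (M j) m) /(_ p Fp) Gp.
    by exfalso; apply: nG; exists j.
exists [set p]; split => //.
- by apply: compact_set1.
- by move=> m [y [Fy /= yp]]; exfalso; apply: nF; exists m; rewrite -yp.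
- by apply: Or31; exists p.
- by move=> j jn [y [Gy /= yp]]; exfalso; apply: nG; exists j; rewrite -?yp.
Qed.

Definition fine_cells (M : nat -> 'I_k -> nat) n (r : R) (P : {fset set Y}) :=
  [/\ forall U, U \in P -> saturated_clopen U,
      forall y, exists2 U, U \in P & U y,
      forall U j, U \in P -> (j < n)%N -> all_or_none (group (M j)) U
    & forall U, U \in P -> exists2 K, small M n K & U `<=` thicken r K].

Lemma fine_cells_exist M n r : 0 < r -> index_disjoint M n ->
  exists P, fine_cells M n r P.
Proof.
move=> r0 Mdisj.
have [V HV] := choice_on (A := setT) (fun p _ => small_cell p r0 Mdisj) (inhabits setT).
have [||D _ cov] := compact_finite_subcover Y_compact (D := setT) (f := V).
- by move=> p _; case: (HV p I) => [[[]]].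
- by move=> p _; exists p => //; case: (HV p I).
exists [fset V p | p in D]%fset; split.
- by move=> _ /imfsetP [p _ ->]; case: (HV p I).
- by move=> y; have [p /= Dp Vpy] := cov y I; exists (V p) => //; exact: in_imfset.
- by move=> _ j /imfsetP [p _ ->]; case: (HV p I) => _ _ + _; apply.
- by move=> _ /imfsetP [p _ ->]; case: (HV p I).
Qed.

Lemma open_avoid_members (O : set Y) B : open O -> O !=set0 ->
  exists2 O', open O' /\ O' !=set0 &
    O' `<=` O `&` [set z | forall m, (m < B)%N -> ~ F m z].
Proof.
move=> oO O0; elim: B => [|B [O' [oO' O'0] sO']]; first by exists O.
exists (O' `&` ~` F B); first split.
- by apply: openI => //; rewrite openC; exact: F_closed.
- exact: F_dense_compl O'0 oO'.
move=> z [/sO' [Oz avoid] nFz]; split => // m.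
by move=> /ltnS_split [-> //|]; exact: avoid.
Qed.

Lemma member_meets_open (O : set Y) i B : open O -> O !=set0 ->
  exists m, [/\ lab m = i, (B <= m)%N & F m `&` O !=set0].
Proof.
move=> oO O0; have [O' [oO' O'0] sO'] := open_avoid_members B oO O0.
have [z [O'z [m /= lm Fmz]]] := F_lab_dense i O'0 oO'.
have [Oz avoid] := sO' z O'z.
by exists m; split => //; [rewrite leqNgt; apply/negP => /avoid | exists z].
Qed.

Lemma group_all_or_none (g : 'I_k -> nat) U c : saturated_clopen U ->
  (forall i, exists2 w, F (g i) w & (U w <-> U c)) -> all_or_none (group g) U.
Proof.
move=> [_ aU] meets; have [Uc|nUc] := pselect (U c); [left|right].
  move=> a [i _ Fa]; have [w Fw /iffRL /(_ Uc) Uw] := meets i.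
  case: (aU (g i)) => [/(_ a Fa) //|FU].
  by have : (F (g i) `&` U) w by []; rewrite FU.
apply/seteqP; split => // a [[i _ Fa] Ua]; have [w Fw wc] := meets i.
case: (aU (g i)) => [/(_ w Fw) /wc //|FU].
by have : (F (g i) `&` U) a by []; rewrite FU.
Qed.

Lemma new_group (M : nat -> 'I_k -> nat) n (Q : {fset set Y}) :
  (forall U, U \in Q -> saturated_clopen U) ->
  exists g : 'I_k -> nat, [/\ forall i, lab (g i) = i,
    forall j i i', (j < n)%N -> M j i <> g i',
    (exists i, g i = n) \/ (exists j i, (j < n)%N /\ M j i = n),
    exists2 i0, (n <= g i0)%N & group g `<=` thicken n.+1%:R^-1 (F (g i0))
    & forall U, U \in Q -> all_or_none (group g) U].
Proof.
move=> sQ; have [B MB] := index_bound M n.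
have [m0 [m0_fresh n_m0 m0_cov]] := fresh_index MB.
pose i0 := lab m0; have [c Fc] := F_neq0 m0.
pose r0 : R := n.+1%:R^-1 / 2.
have r0_gt0 : 0 < r0 by rewrite divr_gt0 // invr_gt0 ltr0n.
have [N FN] := F_null r0_gt0.
have : nbhs c ([set y | forall U, U \in Q -> (U y <-> U c)] `&` ball c r0).
  by apply: filterI; [apply: nbhs_same_clopens => U /sQ [] | exact: nbhsx_ballx].
rewrite nbhsE => -[O [oO Oc] OA].
have [pick Hpick] :=
  choice (fun i => member_meets_open i (maxn B N) oO (ex_intro _ c Oc)).
pose g i := if i == i0 then m0 else pick i.
have g_meets i : exists2 w, F (g i) w & O w.
  rewrite /g; case: eqP => _; first by exists c.
  by case: (Hpick i) => _ _ [w [Fw Ow]]; exists w.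
exists g; split.
- by move=> i; rewrite /g; case: eqP => [->|_] //; case: (Hpick i).
- move=> j i i' jn; rewrite /g; case: eqP => _; first exact: m0_fresh.
  case: (Hpick i') => _ Bp _ Mp; have := MB j i jn; rewrite Mp ltnNge.
  by rewrite (leq_trans (leq_maxl B N) Bp).
- by case: m0_cov => [e|]; [left; exists i0; rewrite /g eqxx | right].
- exists i0; rewrite /g eqxx // => a [i _]; case: eqP => [_ Fa|_ Fa].
    by apply: sub_thicken; rewrite ?invr_gt0 ?ltr0n.
  have [_ Np [w [Fw Ow]]] := Hpick i; exists c => //.
  have [_] := OA w Ow; rewrite ballEmdist /= => cw.
  have wa := FN (pick i) w a (leq_trans (leq_maxr B N) Np) Fw Fa.
  rewrite (le_lt_trans (metric_triangle c w a)) // [X in _ < X](splitr (n.+1%:R^-1)).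
  exact: ltrD.
- move=> U QU; apply: (group_all_or_none (c := c) (sQ U QU)) => i.
  by have [w Fw /OA [same _]] := g_meets i; exists w => //; exact: same.
Qed.

Lemma eq_small M M' n K : (forall j, (j < n)%N -> M' j = M j) ->
  small M n K -> small M' n K.
Proof.
move=> MM' [sm|sm|[j jn ->]]; [exact: Or31 | exact: Or32 |].
by apply: Or33; exists j; rewrite ?MM'.
Qed.

Lemma small_succ M n K : small M n K -> small M n.+1 K.
Proof.
case=> [sm|sm|[j jn ->]]; [exact: Or31 | exact: Or32 |].
by apply: Or33; exists j => //; exact: ltnW.
Qed.

Lemma eq_fine_cells M M' n r P : (forall j, (j < n)%N -> M' j = M j) ->
  fine_cells M n r P -> fine_cells M' n r P.
Proof.
move=> MM' [sP cP aP smP]; split => // [U j UP jn|U UP].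
  by rewrite MM' //; exact: aP.
by have [K smK UK] := smP U UP; exists K => //; exact: eq_small smK.
Qed.

Lemma fine_cells_succ M n r P : fine_cells M n r P ->
  (forall U, U \in P -> all_or_none (group (M n)) U) -> fine_cells M n.+1 r P.
Proof.
move=> [sP cP aP smP] aPn; split => // [U j UP|U UP].
  by move=> /ltnS_split [->|]; [exact: aPn | exact: aP].
by have [K smK UK] := smP U UP; exists K => //; exact: small_succ.
Qed.

(* [M j] lists the members of group [j], one per label, and [C t] is the cover
   chosen at stage [t]. *)
Record stage_inv (M : nat -> 'I_k -> nat) (C : nat -> {fset set Y}) n : Prop := {
  inv_lab : forall j i, (j < n)%N -> lab (M j i) = i;
  inv_disj : index_disjoint M n;
  inv_cover : forall m, (m < n)%N -> exists j i, (j < n)%N /\ M j i = m;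
  inv_anchor : forall j, (j < n)%N ->
    exists2 i0, (j <= M j i0)%N & group (M j) `<=` thicken j.+1%:R^-1 (F (M j i0));
  inv_cells : forall t, (t < n)%N -> fine_cells M n t.+1%:R^-1 (C t) }.

Lemma stage_inv_step M C n : stage_inv M C n ->
  exists g P, forall M' C', (forall j, (j < n)%N -> M' j = M j /\ C' j = C j) ->
    M' n = g -> C' n = P -> stage_inv M' C' n.+1.
Proof.
move=> inv_n; pose Q := (\bigcup_(t <- iota 0 n) C t)%fset.
have sQ U : U \in Q -> saturated_clopen U.
  move=> /bigfcupP [t]; rewrite mem_iota andbT => tn UC.
  by case: (inv_cells inv_n tn) => + _ _ _; apply.
have [g [g_lab g_fresh g_cov [i0 n_i0 g_near] g_aon]] := new_group M n sQ.
pose M1 j := if (j < n)%N then M j else g.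
have M1_disj : index_disjoint M1 n.+1.
  move=> j j' i i' /ltnS_split [->|jn] /ltnS_split [->|j'n];
    rewrite /M1 ?ltnn ?jn ?j'n // => e.
  - by exfalso; apply: (g_fresh j' i' i j'n).
  - by exfalso; apply: (g_fresh j i i' jn).
  - exact: (inv_disj inv_n jn j'n e).
have r_gt0 : 0 < n.+1%:R^-1 :> R by rewrite invr_gt0 ltr0n.
have [P fineP] := fine_cells_exist r_gt0 M1_disj.
exists g, P => M' C' agree M'n C'n.
have M'E j : (j < n.+1)%N -> M' j = M1 j.
  rewrite /M1 => /ltnS_split [->|jn]; first by rewrite ltnn.
  by rewrite jn (agree j jn).1.
split.
- move=> j i /ltnS_split [->|jn]; first by rewrite M'n g_lab.
  by rewrite (agree j jn).1; exact: inv_lab inv_n _ _ jn.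
- by move=> j j' i i' jn j'n; rewrite !M'E //; exact: M1_disj.
- move=> m /ltnS_split [->|mn].
    case: g_cov => [[i e]|[j [i [jn e]]]]; first by exists n, i; rewrite M'n.
    by exists j, i; rewrite (agree j jn).1 ltnW.
  have [j [i [jn e]]] := inv_cover inv_n mn.
  by exists j, i; rewrite (agree j jn).1 ltnW.
- move=> j /ltnS_split [->|jn]; first by rewrite M'n; exists i0.
  by rewrite (agree j jn).1; exact: inv_anchor inv_n _ jn.
move=> t /ltnS_split [->|tn].
  by rewrite C'n; apply: eq_fine_cells fineP.
rewrite (agree t tn).2; apply: fine_cells_succ; last first.
  move=> U UC; rewrite M'n; apply: g_aon.
  by apply/bigfcupP; exists t; rewrite ?mem_iota ?andbT.
by apply: eq_fine_cells (inv_cells inv_n tn) => j /agree [].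
Qed.

Lemma stage_inv_exists :
  exists (M : nat -> 'I_k -> nat) (C : nat -> {fset set Y}), forall n, stage_inv M C n.
Proof.
pose s0 : ('I_k -> nat) * {fset set Y} := (fun=> 0%N, fset0).
(* Quantifying over all extensions of the history lets the invariant pass to
   the limit. *)
pose good h := forall M C, (forall j, (j < size h)%N ->
  M j = (nth s0 h j).1 /\ C j = (nth s0 h j).2) -> stage_inv M C (size h).
have good0 : good [::] by move=> M C _; split.
have good_ext h : good h -> exists x, good (rcons h x).
  move=> gh; have [g [P ext]] := stage_inv_step (gh _ _ (fun _ _ => conj erefl erefl)).
  exists (g, P) => M C agree; rewrite size_rcons.
  have := agree (size h); rewrite size_rcons ltnSn nth_rcons ltnn eqxx.
  move=> /(_ isT) [Mn Cn].
  apply: ext Mn Cn => j jn; have := agree j; rewrite size_rcons nth_rcons jn.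
  by apply; rewrite ltnW.
have [f good_f] := dependent_choice_seq good0 good_ext.
exists (fun j => (f j).1), (fun j => (f j).2) => n.
by move: (good_f n); rewrite /good size_mkseq; apply => j jn; rewrite nth_mkseq.
Qed.

Section Limit.
Variables (M : nat -> 'I_k -> nat) (C : nat -> {fset set Y}).
Hypothesis MC : forall n, stage_inv M C n.

Lemma M_lab j i : lab (M j i) = i.
Proof. exact: inv_lab (MC j.+1) _ _ (ltnSn j). Qed.

Lemma M_eq j j' i i' : M j i = M j' i' -> j = j'.
Proof. by apply: (inv_disj (MC (maxn j j').+1)); rewrite ltnS ?leq_maxl ?leq_maxr. Qed.

Lemma M_cover m : exists j i, M j i = m.
Proof. by have [j [i [_ e]]] := inv_cover (MC m.+1) (ltnSn m); exists j, i. Qed.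

Lemma groups_disj j j' : j <> j' -> group (M j) `&` group (M j') = set0.
Proof.
move=> jj'; apply/seteqP; split => // y [[i _ Fy] [i' _ F'y]].
by apply: jj'; exact: M_eq (F_eq Fy F'y).
Qed.

Lemma group_neq0 j : group (M j) !=set0.
Proof. by have [y Fy] := F_neq0 (M j (lab 0%N)); exists y; exists (lab 0%N). Qed.

Lemma null_groups : null_family (fun j => group (M j)).
Proof.
move=> eps eps_gt0.
have [N1 HN1] : exists N, forall j, (N <= j)%N -> j.+1%:R^-1 < eps / 4.
  by apply: inv_succn_lt; rewrite divr_gt0.
have [N2 HN2] : exists N,
    forall n a b, (N <= n)%N -> F n a -> F n b -> mdist a b < eps / 2.
  by apply: F_null; rewrite divr_gt0.
exists (maxn N1 N2) => j a b Nj Ga Gb.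
have [i0 j_i0 near] := inv_anchor (MC j.+1) (ltnSn j).
have [c Fc ca] := near a Ga; have [c' Fc' c'b] := near b Gb.
have rj := HN1 j (leq_trans (leq_maxl _ _) Nj).
have cc' := HN2 _ c c' (leq_trans (leq_maxr _ _) (leq_trans Nj j_i0)) Fc Fc'.
have tri : mdist a b <= mdist c a + mdist c c' + mdist c' b.
  rewrite (le_trans (metric_triangle a c b)) // metric_sym -addrA lerD2l.
  exact: metric_triangle.
rewrite (le_lt_trans tri) //; move: ca c'b rj; set r := j.+1%:R^-1; lra.
Qed.

Lemma dense_compl_group j : dense (~` group (M j)).
Proof.
move=> O O0 oO; have [B MB] := index_bound (fun _ => M j) 1.
have [O' [_ [z O'z]] sO'] := open_avoid_members B oO O0.
have [Oz avoid] := sO' z O'z; exists z; split => // -[i _ Fz].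
by apply: (avoid (M j i)) Fz; exact: (MB 0%N).
Qed.

Lemma dense_groups : dense (\bigcup_j group (M j)).
Proof.
move=> O O0 oO; have [z [Oz [n _ Fz]]] := F_lab_dense (lab 0%N) O0 oO.
have [j [i e]] := M_cover n; exists z; split => //; exists j => //; exists i => //.
by rewrite e.
Qed.

Lemma small_in_group n K : small M n K ->
  (exists p, K = [set p]) \/ exists j, K `<=` group (M j).
Proof.
case=> [?|[m ->]|[j _ ->]]; [by left | right | by right; exists j].
by have [j [i e]] := M_cover m; exists j => y Fy; exists i => //; rewrite e.
Qed.

Lemma separating_radius x y : x <> y ->
  ~ (exists j, group (M j) x /\ group (M j) y) ->
  exists2 r, 0 < r & forall n K, small M n K -> ~ (thicken r K x /\ thicken r K y).
Proof.
move=> xy nxy; have d_gt0 : 0 < mdist x y by rewrite mdist_gt0; apply/eqP.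
have [N HN] : exists N, forall j a b, (N <= j)%N ->
    group (M j) a -> group (M j) b -> mdist a b < mdist x y / 3.
  by apply: null_groups; rewrite divr_gt0.
have [||r1 r1_gt0 Hr1] := @uniform_radius R N
  (fun j r => ~ (thicken r (group (M j)) x /\ thicken r (group (M j)) y)).
- move=> j r s _ sr Q [xs ys]; apply: Q.
  have mono := thickenS sr (@subset_refl _ (group (M j))).
  by split; [exact: mono xs | exact: mono ys].
- move=> j _; have : ~ group (M j) x \/ ~ group (M j) y.
    by apply: contrapT => /not_orP [/contrapT Gx /contrapT Gy]; apply: nxy; exists j.
  by case=> /(closed_not_thicken (@closed_group (M j))) [r r_gt0 nr]; exists r => // -[].
have r_gt0 : 0 < Num.min r1 (mdist x y / 3) by rewrite lt_min r1_gt0 divr_gt0.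
exists (Num.min r1 (mdist x y / 3)) => // n K /small_in_group [[p ->]|[j KG]] [Kx Ky].
  have [_ -> px] := Kx; have [_ -> py] := Ky.
  move: px py; rewrite !lt_min => /andP [_ px] /andP [_ py].
  have := metric_triangle x p y; rewrite [mdist x p]metric_sym; lra.
have [jN|Nj] := ltnP j N.
  have le_r1 : Num.min r1 (mdist x y / 3) <= r1 by rewrite ge_min lexx.
  apply: (Hr1 j jN).
  by split; [exact: (thickenS le_r1 KG Kx) | exact: (thickenS le_r1 KG Ky)].
have [a /KG Ga ax] := Kx; have [b /KG Gb yb] := Ky.
move: ax yb; rewrite !lt_min => /andP [_ ax] /andP [_ yb].
have ab := HN j a b Nj Ga Gb.
have := metric_triangle x a y; have := metric_triangle a b y.
rewrite [mdist x a]metric_sym; lra.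
Qed.

Lemma separate_groups x y : x <> y -> ~ (exists j, group (M j) x /\ group (M j) y) ->
  exists U : set Y, open U /\ closed U /\
    (forall j, group (M j) `<=` U \/ group (M j) `&` U = set0) /\ U x /\ ~ U y.
Proof.
move=> xy nxy; have [r r_gt0 Hr] := separating_radius xy nxy.
have [t Ht] := inv_succn_lt r_gt0.
have [sC cC _ smC] := inv_cells (MC t.+1) (ltnSn t).
have [U Ut Ux] := cC x; have [[oU clU] _] := sC U Ut.
exists U; split => //; split => //; split; last split => //.
  move=> j; have tn : (t < (maxn t j).+1)%N by rewrite ltnS leq_maxl.
  have [_ _ aC _] := inv_cells (MC (maxn t j).+1) tn.
  by apply: aC; rewrite // ltnS leq_maxr.
move=> Uy; have [K smK UK] := smC U Ut; apply: (Hr _ _ smK).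
have le_r : t.+1%:R^-1 <= r by exact/ltW/Ht.
by split; apply: (thickenS le_r (fun _ h => h)); apply: UK.
Qed.

Lemma homeomorphic_group (X : 'I_k -> topologicalType) j :
  (forall n, homeomorphic_subspace (X (lab n)) (F n)) -> {i & X i} ->
  homeomorphic_subspace {i & X i} (group (M j)).
Proof.
move=> Fhom s0; apply: homeomorphic_subspace_sigT => // [i|i i' ii'|i].
- exact: F_closed.
- by apply: F_disj => e; apply: ii'; rewrite -(M_lab j i) e M_lab.
- by have := Fhom (M j i); rewrite M_lab.
Qed.

End Limit.

Lemma regular_groups (X : 'I_k -> topologicalType) :
  (forall n, homeomorphic_subspace (X (lab n)) (F n)) -> {i & X i} ->
  regular (fun _ : 'I_1 => ({i & X i} : topologicalType)) Y.
Proof.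
move=> Fhom s0; have [M [C MC]] := stage_inv_exists.
exists (fun j => group (M j)), (fun=> ord0); split.
  move=> j j' e; apply: contrapT => /(groups_disj MC); rewrite e setIid => G0.
  by have := group_neq0 M j'; rewrite G0 => -[].
split; first exact: groups_disj.
split; first by move=> j; exact: homeomorphic_group.
split; first exact/null_familyP/null_groups.
split; first exact: dense_compl_group.
split; last exact: separate_groups.
move=> i; suff -> : [set j : nat | ord0 = i] = setT by exact: dense_groups.
by apply/seteqP; split => // j _; rewrite /= (ord1 i).
Qed.

End Grouping.

Theorem proposition2p2 (R : realType) (k : nat) (X : 'I_k -> metricType R)
    (Y : metricType R) :
  (forall i, compact [set: X i]) ->
  (forall i, [set: X i] !=set0) ->
  compact [set: Y] ->
  regular (fun i => (X i : topologicalType)) Y ->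
  regular (fun _ : 'I_1 => ({i : 'I_k & X i} : topologicalType)) Y.
Proof.
move=> X_compact X_neq0 Y_compact [F [lab [_ [F_disj [F_hom [F_null rest]]]]]].
have [F_dense_compl [F_lab_dense F_sep]] := rest.
have F_compact n : compact (F n).
  have [f [g [cf [<- _]]]] := F_hom n.
  by apply: continuous_compact; [exact: continuous_subspaceT | exact: X_compact].
have F_neq0 n : F n !=set0.
  by have [f [g [_ [<- _]]]] := F_hom n; have [x _] := X_neq0 (lab n); exists (f x), x.
have [x0 _] := X_neq0 (lab 0%N).
exact: (regular_groups (X := fun i => X i : topologicalType) Y_compact F_compact F_neq0
  F_disj ((null_familyP F).1 F_null) F_dense_compl F_lab_dense F_sep F_hom
  (existT _ (lab 0%N) x0)).
Qed.
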